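(* Let $s > 3/2$ be real. For $1/3 \le A \le 1$ define \[ L(A;s) = \sum_{\substack{i,j,k\in\mathbb{Z}\\ (i,j,k)\neq(0,0,0)}} \left(\frac{A+1}{A(i+j)^2+(j+k)^2+(i+k)^2}\right)^s . \] Then \[ \frac{\partial}{\partial A} L(A;s)\Big|_{A=1/2} = 0 \qquad\text{and}\qquad \frac{\partial^2}{\partial A^2} L(A;s)\Big|_{A=1/2} > 0 . \]
   Context: The function $L(A;s)$ is the Epstein zeta function of the normalised cuboidal lattice. For $u,v>0$ with $A=u^2/v^2$, the cuboidal lattice is generated by $(u,v,0)$, $(u,0,v)$, $(0,v,v)$. For $1/3\le A\le 1$ it is scaled so that its minimum nonzero squared norm is $1$, i.e. $v = 1/\sqrt{A+1}$. Its quadratic form is then $g(A;i,j,k) = \frac{1}{A+1}\bigl(A(i+j)^2+(j+k)^2+(i+k)^2\bigr)$, and the series defining $L(A;s)$ converges for $s>3/2$. The value $A=1/2$ corresponds to the body-centred cubic lattice, and $A=1$ to the face-centred cubic lattice. *)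

From Stdlib Require Import Reals ZArith List.
From Coquelicot Require Import Coquelicot.
Open Scope R_scope.

Definition Qform (A : R) (i j k : Z) : R :=
  A * (IZR (i + j))^2 + (IZR (j + k))^2 + (IZR (i + k))^2.

(* The summand ((A+1)/Q(i,j,k))^s; zero at the origin (excluded from the sum). *)
Definition term (A s : R) (i j k : Z) : R :=
  if (Z.eqb i 0 && Z.eqb j 0 && Z.eqb k 0)%bool then 0
  else Rpower ((A + 1) / Qform A i j k) s.

Definition zrange (N : nat) : list Z :=
  map (fun n => (Z.of_nat n - Z.of_nat N)%Z) (seq 0 (2 * N + 1)).

Definition sumZ (l : list Z) (f : Z -> R) : R :=
  fold_right (fun z acc => f z + acc) 0 l.

Definition box_sum (A s : R) (N : nat) : R :=
  sumZ (zrange N) (fun i => sumZ (zrange N) (fun j => sumZ (zrange N)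
    (fun k => term A s i j k))).

(* L(A;s): the sum over Z^3 \ {0}; since all terms are nonnegative (A > 0),
   the unordered sum equals the limit of the box partial sums. *)
Definition L (A s : R) : R := real (Lim_seq (box_sum A s)).

(* For [2/5 <= A <= 3/5] each coordinate [c] of a nonzero lattice point satisfies
   [(1 + |c|)^2 <= 9 Q], so the terms of [L] and of its first two [A]-derivatives are dominated
   by [C ((1+|i|) (1+|j|) (1+|k|))^(-2s/3)], which is summable precisely because [s > 3/2].
   The box partial sums then converge uniformly with an explicit rate, and [L] can be
   differentiated twice term by term.
   At [A = 1/2] the form [Q] is invariant under [(i,j,k) -> (i+k, j+k, -k)] and
   [(i,j,k) -> (i, -j, j+k)], which move the weight [(i+j)^2] of [A] to [(i+j+2k)^2] and
   [(i-j)^2]. These three weights add up to [2 Q], so [dL/dA] is a sum of differences along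
   orbits and vanishes, and [d^2L/dA^2] becomes [s^2 + s] times a sum of nonnegative terms,
   one of which is positive. *)

From Stdlib Require Import Reals ZArith List Lra Lia.
From Coquelicot Require Import Coquelicot.
Open Scope R_scope.

(** * Finite sums over integer ranges *)

Lemma sumZ_cons z l f : sumZ (z :: l) f = f z + sumZ l f.
Proof. reflexivity. Qed.

Lemma sumZ_app l1 l2 f : sumZ (l1 ++ l2) f = sumZ l1 f + sumZ l2 f.
Proof.
  induction l1 as [|z l IH]; simpl app; [simpl; ring | rewrite !sumZ_cons, IH; ring].
Qed.

Lemma sumZ_ext_in l f g : (forall z, In z l -> f z = g z) -> sumZ l f = sumZ l g.
Proof.
  induction l as [|z l IH]; intro H; [reflexivity|].
  rewrite !sumZ_cons, H by now left. f_equal. apply IH. intros; apply H; now right.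
Qed.

Lemma sumZ_ext l f g : (forall z, f z = g z) -> sumZ l f = sumZ l g.
Proof. intro H; apply sumZ_ext_in; auto. Qed.

Lemma sumZ_0 l : sumZ l (fun _ => 0) = 0.
Proof. induction l; [simpl; ring | rewrite !sumZ_cons, IHl; ring]. Qed.

Lemma sumZ_plus l f g : sumZ l (fun z => f z + g z) = sumZ l f + sumZ l g.
Proof. induction l; [simpl; ring | rewrite !sumZ_cons, IHl; ring]. Qed.

Lemma sumZ_minus l f g : sumZ l (fun z => f z - g z) = sumZ l f - sumZ l g.
Proof. induction l; [simpl; ring | rewrite !sumZ_cons, IHl; ring]. Qed.

Lemma sumZ_scal l c f : sumZ l (fun z => c * f z) = c * sumZ l f.
Proof. induction l; [simpl; ring | rewrite !sumZ_cons, IHl; ring]. Qed.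

Lemma sumZ_scal_r l c f : sumZ l (fun z => f z * c) = sumZ l f * c.
Proof. induction l; [simpl; ring | rewrite !sumZ_cons, IHl; ring]. Qed.

Lemma sumZ_le l f g : (forall z, f z <= g z) -> sumZ l f <= sumZ l g.
Proof.
  intro H; induction l as [|z l IH]; [simpl; lra|].
  rewrite !sumZ_cons. specialize (H z). lra.
Qed.

Lemma sumZ_nonneg l f : (forall z, 0 <= f z) -> 0 <= sumZ l f.
Proof. intro H; rewrite <- (sumZ_0 l); now apply sumZ_le. Qed.

Lemma sumZ_abs l f : Rabs (sumZ l f) <= sumZ l (fun z => Rabs (f z)).
Proof.
  induction l as [|z l IH]; [simpl; rewrite Rabs_R0; lra|].
  rewrite !sumZ_cons. eapply Rle_trans; [apply Rabs_triang | lra].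
Qed.

Lemma sumZ_ge_term l f z0 : (forall z, 0 <= f z) -> In z0 l -> f z0 <= sumZ l f.
Proof.
  intro H; induction l as [|z l IH]; [intros []|]; intros [<- | Hin]; rewrite sumZ_cons.
  - pose proof (sumZ_nonneg l f H). lra.
  - pose proof (IH Hin). pose proof (H z). lra.
Qed.

Lemma sumZ_swap l1 l2 (F : Z -> Z -> R) :
  sumZ l1 (fun i => sumZ l2 (fun j => F i j)) = sumZ l2 (fun j => sumZ l1 (fun i => F i j)).
Proof.
  induction l1 as [|i l1 IH].
  - symmetry; apply sumZ_0.
  - rewrite sumZ_cons, IH, <- sumZ_plus. reflexivity.
Qed.

Lemma sumZ_derive l (F : R -> Z -> R) (F' : Z -> R) x :
  (forall z, is_derive (fun A => F A z) x (F' z)) ->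
  is_derive (fun A => sumZ l (F A)) x (sumZ l F').
Proof.
  intro H; induction l as [|z l IH]; simpl.
  - apply (is_derive_const (K := R_AbsRing) (V := R_NormedModule)).
  - apply (is_derive_plus (fun A => F A z)); auto.
Qed.

Lemma zrange_S N :
  zrange (S N) = (- Z.of_nat (S N))%Z :: zrange N ++ Z.of_nat (S N) :: nil.
Proof.
  unfold zrange. replace (2 * S N + 1)%nat with (S (S (2 * N + 1))) by lia.
  rewrite seq_S. cbn [seq]. rewrite <- seq_shift. cbn [map app].
  rewrite map_app, map_map. cbn [map].
  replace (Z.of_nat 0 - Z.of_nat (S N))%Z with (- Z.of_nat (S N))%Z by lia.
  replace (Z.of_nat (0 + S (2 * N + 1)) - Z.of_nat (S N))%Z with (Z.of_nat (S N)) by lia.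
  f_equal. f_equal. apply map_ext; intro; lia.
Qed.

Lemma in_zrange N z : In z (zrange N) <-> (Z.abs z <= Z.of_nat N)%Z.
Proof.
  unfold zrange. rewrite in_map_iff. split.
  - intros (n & <- & Hn). apply in_seq in Hn. lia.
  - intro H. exists (Z.to_nat (z + Z.of_nat N)). split; [lia | apply in_seq; lia].
Qed.

Lemma sumZ_zrange_S N f :
  sumZ (zrange (S N)) f = sumZ (zrange N) f + f (Z.of_nat (S N)) + f (- Z.of_nat (S N))%Z.
Proof. rewrite zrange_S, sumZ_cons, sumZ_app, sumZ_cons. simpl. ring. Qed.

Lemma sumZ_zrange_opp N f : sumZ (zrange N) (fun z => f (- z)%Z) = sumZ (zrange N) f.
Proof.
  induction N; [reflexivity|].
  rewrite !sumZ_zrange_S, IHN, Z.opp_involutive. ring.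
Qed.

Definition supportedZ (K : nat) (f : Z -> R) : Prop :=
  forall z, (Z.of_nat K < Z.abs z)%Z -> f z = 0.

Lemma sumZ_zrange_supported K N f :
  supportedZ K f -> (K <= N)%nat -> sumZ (zrange N) f = sumZ (zrange K) f.
Proof.
  intros Hf; induction 1; [reflexivity|].
  rewrite sumZ_zrange_S, IHle, !Hf by lia. ring.
Qed.

Lemma sumZ_zrange_shift1 N f :
  sumZ (zrange N) (fun z => f (z + 1)%Z)
  = sumZ (zrange N) f - f (- Z.of_nat N)%Z + f (Z.of_nat N + 1)%Z.
Proof.
  induction N; [simpl; ring|].
  rewrite !sumZ_zrange_S, IHN.
  replace (- Z.of_nat (S N) + 1)%Z with (- Z.of_nat N)%Z by lia.
  replace (Z.of_nat N + 1)%Z with (Z.of_nat (S N)) by lia. ring.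
Qed.

Lemma sumZ_zrange_shift_nat K N c f :
  supportedZ K f -> (K + c <= N)%nat ->
  sumZ (zrange N) (fun z => f (z + Z.of_nat c)%Z) = sumZ (zrange N) f.
Proof.
  revert f; induction c as [|c IH]; intros f Hf Hc.
  - apply sumZ_ext; intro z; f_equal; lia.
  - rewrite (sumZ_ext _ _ (fun z => f (z + 1 + Z.of_nat c)%Z)) by (intro; f_equal; lia).
    rewrite (sumZ_zrange_shift1 N (fun w => f (w + Z.of_nat c)%Z)), IH by (auto; lia).
    rewrite !Hf by lia. ring.
Qed.

Lemma sumZ_zrange_shift K N c f :
  supportedZ K f -> (Z.of_nat K + Z.abs c <= Z.of_nat N)%Z ->
  sumZ (zrange N) (fun z => f (z + c)%Z) = sumZ (zrange N) f.
Proof.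
  intros Hf Hc. destruct (Z_le_gt_dec 0 c).
  - replace c with (Z.of_nat (Z.to_nat c)) by lia.
    apply (sumZ_zrange_shift_nat K); auto; lia.
  - rewrite <- sumZ_zrange_opp, <- (sumZ_zrange_opp N f).
    rewrite (sumZ_ext _ _ (fun z => f (- (z + Z.of_nat (Z.to_nat (- c))))%Z))
      by (intro; f_equal; lia).
    apply (sumZ_zrange_shift_nat K N _ (fun z => f (- z)%Z)); [|lia].
    intros z Hz; apply Hf; lia.
Qed.

Definition box3 (N : nat) (g : Z -> Z -> Z -> R) : R :=
  sumZ (zrange N) (fun i => sumZ (zrange N) (fun j => sumZ (zrange N) (fun k => g i j k))).

Lemma box3_ext N f g : (forall i j k, f i j k = g i j k) -> box3 N f = box3 N g.
Proof. intro H. do 3 (apply sumZ_ext; intro). apply H. Qed.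

Lemma box3_plus N f g : box3 N (fun i j k => f i j k + g i j k) = box3 N f + box3 N g.
Proof.
  unfold box3. rewrite <- sumZ_plus. apply sumZ_ext; intro.
  rewrite <- sumZ_plus. apply sumZ_ext; intro. apply sumZ_plus.
Qed.

Lemma box3_minus N f g : box3 N (fun i j k => f i j k - g i j k) = box3 N f - box3 N g.
Proof.
  unfold box3. rewrite <- sumZ_minus. apply sumZ_ext; intro.
  rewrite <- sumZ_minus. apply sumZ_ext; intro. apply sumZ_minus.
Qed.

Lemma box3_scal N c g : box3 N (fun i j k => c * g i j k) = c * box3 N g.
Proof.
  unfold box3. rewrite <- sumZ_scal. apply sumZ_ext; intro.
  rewrite <- sumZ_scal. apply sumZ_ext; intro. apply sumZ_scal.
Qed.

Lemma box3_le N f g : (forall i j k, f i j k <= g i j k) -> box3 N f <= box3 N g.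
Proof. intro H. do 3 (apply sumZ_le; intro). apply H. Qed.

Lemma box3_abs N g : Rabs (box3 N g) <= box3 N (fun i j k => Rabs (g i j k)).
Proof.
  eapply Rle_trans; [apply sumZ_abs | apply sumZ_le; intro].
  eapply Rle_trans; [apply sumZ_abs | apply sumZ_le; intro]. apply sumZ_abs.
Qed.

Lemma box3_ge_point N g i j k :
  (forall i j k, 0 <= g i j k) ->
  (Z.abs i <= Z.of_nat N)%Z -> (Z.abs j <= Z.of_nat N)%Z -> (Z.abs k <= Z.of_nat N)%Z ->
  g i j k <= box3 N g.
Proof.
  intros Hg Hi Hj Hk. unfold box3.
  eapply Rle_trans; [|apply (sumZ_ge_term _ _ i); [|now apply in_zrange]].
  2:{ intro; do 2 (apply sumZ_nonneg; intro). apply Hg. }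
  eapply Rle_trans; [|apply (sumZ_ge_term _ _ j); [|now apply in_zrange]].
  2:{ intro; apply sumZ_nonneg; intro. apply Hg. }
  apply sumZ_ge_term; [apply Hg | now apply in_zrange].
Qed.

Lemma box3_derive N (g : R -> Z -> Z -> Z -> R) g' x :
  (forall i j k, is_derive (fun A => g A i j k) x (g' i j k)) ->
  is_derive (fun A => box3 N (g A)) x (box3 N g').
Proof.
  intro H. unfold box3.
  apply (sumZ_derive _ (fun A i => sumZ _ (fun j => sumZ _ (fun k => g A i j k)))); intro i.
  apply (sumZ_derive _ (fun A j => sumZ _ (fun k => g A i j k))); intro j.
  apply (sumZ_derive _ (fun A k => g A i j k)); intro k. apply H.
Qed.

Lemma box3_prod N a b c :
  box3 N (fun i j k => a i * b j * c k) = sumZ (zrange N) a * sumZ (zrange N) b * sumZ (zrange N) c.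
Proof.
  unfold box3.
  rewrite (sumZ_ext _ _ (fun i => a i * (sumZ (zrange N) b * sumZ (zrange N) c))).
  { rewrite sumZ_scal_r. ring. }
  intro i. rewrite (sumZ_ext _ _ (fun j => a i * b j * sumZ (zrange N) c)).
  { rewrite sumZ_scal_r, sumZ_scal. ring. }
  intro j. rewrite <- sumZ_scal. apply sumZ_ext; intro; ring.
Qed.

Definition indZ (N : nat) (z : Z) : R := if (Z.abs z <=? Z.of_nat N)%Z then 1 else 0.

Definition indZ3 (N : nat) (i j k : Z) : R := indZ N i * indZ N j * indZ N k.

Lemma indZ_in N z : (Z.abs z <= Z.of_nat N)%Z -> indZ N z = 1.
Proof. intro H. unfold indZ. now rewrite (proj2 (Z.leb_le _ _) H). Qed.

Lemma indZ_out N z : (Z.of_nat N < Z.abs z)%Z -> indZ N z = 0.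
Proof. intro H. unfold indZ. now rewrite (proj2 (Z.leb_gt _ _) H). Qed.

Lemma indZ_cases N z : indZ N z = 0 \/ indZ N z = 1.
Proof. unfold indZ. destruct (_ <=? _)%Z; auto. Qed.

Lemma indZ3_in N i j k :
  (Z.abs i <= Z.of_nat N)%Z -> (Z.abs j <= Z.of_nat N)%Z -> (Z.abs k <= Z.of_nat N)%Z ->
  indZ3 N i j k = 1.
Proof. intros. unfold indZ3. rewrite !indZ_in by assumption. ring. Qed.

Lemma indZ3_cases N i j k : indZ3 N i j k = 0 \/
  (indZ3 N i j k = 1 /\
   (Z.abs i <= Z.of_nat N)%Z /\ (Z.abs j <= Z.of_nat N)%Z /\ (Z.abs k <= Z.of_nat N)%Z).
Proof.
  unfold indZ3.
  destruct (Z_le_gt_dec (Z.abs i) (Z.of_nat N)); [|rewrite (indZ_out N i) by lia; left; ring].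
  destruct (Z_le_gt_dec (Z.abs j) (Z.of_nat N)); [|rewrite (indZ_out N j) by lia; left; ring].
  destruct (Z_le_gt_dec (Z.abs k) (Z.of_nat N)); [|rewrite (indZ_out N k) by lia; left; ring].
  right. rewrite !indZ_in by lia. repeat split; auto; ring.
Qed.

Lemma sumZ_indZ N M f : (N <= M)%nat ->
  sumZ (zrange M) (fun z => indZ N z * f z) = sumZ (zrange N) f.
Proof.
  intro H. rewrite (sumZ_zrange_supported N) by (auto; intros z Hz; rewrite indZ_out by lia; ring).
  apply sumZ_ext_in; intros z Hz%in_zrange. rewrite indZ_in by lia. ring.
Qed.

Lemma box3_indZ3 N M g : (N <= M)%nat ->
  box3 M (fun i j k => indZ3 N i j k * g i j k) = box3 N g.
Proof.
  intro H. unfold box3, indZ3.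
  rewrite (sumZ_ext (zrange M) _ (fun i => indZ N i * sumZ (zrange M) (fun j =>
    indZ N j * sumZ (zrange M) (fun k => indZ N k * g i j k)))).
  2:{ intro i. rewrite <- sumZ_scal. apply sumZ_ext; intro j.
      rewrite <- !sumZ_scal. apply sumZ_ext; intro k. ring. }
  rewrite sumZ_indZ by auto. apply sumZ_ext; intro i.
  rewrite sumZ_indZ by auto. apply sumZ_ext; intro j. now apply sumZ_indZ.
Qed.

Definition supported3 (K : nat) (g : Z -> Z -> Z -> R) : Prop :=
  forall i j k, (Z.of_nat K < Z.abs i \/ Z.of_nat K < Z.abs j \/ Z.of_nat K < Z.abs k)%Z ->
  g i j k = 0.

Lemma box3_k_outer N g :
  box3 N g =
  sumZ (zrange N) (fun k => sumZ (zrange N) (fun i => sumZ (zrange N) (fun j => g i j k))).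
Proof.
  unfold box3.
  rewrite (sumZ_ext _ _ (fun i => sumZ (zrange N) (fun k => sumZ (zrange N) (fun j => g i j k))))
    by (intro; apply sumZ_swap).
  apply sumZ_swap.
Qed.

Lemma box3_shear_k K M g : supported3 K g -> (2 * K <= M)%nat ->
  box3 M (fun i j k => g (i + k)%Z (j + k)%Z (- k)%Z) = box3 M g.
Proof.
  intros Hg HM. rewrite !box3_k_outer.
  rewrite <- (sumZ_zrange_opp M (fun k => sumZ _ (fun i => sumZ _ (fun j => g i j k)))).
  apply sumZ_ext; intro k.
  destruct (Z_le_gt_dec (Z.abs k) (Z.of_nat K)).
  - rewrite (sumZ_ext _ _ (fun i => sumZ (zrange M) (fun j => g (i + k)%Z j (- k)%Z))).
    2:{ intro i. apply (sumZ_zrange_shift K M k (fun j => g (i + k)%Z j (- k)%Z)); [|lia].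
        intros j Hj. apply Hg. lia. }
    apply (sumZ_zrange_shift K M k (fun i => sumZ (zrange M) (fun j => g i j (- k)%Z))); [|lia].
    intros i Hi. rewrite <- (sumZ_0 (zrange M)). apply sumZ_ext; intro j. apply Hg. lia.
  - transitivity 0; [|symmetry]; rewrite <- (sumZ_0 (zrange M)); apply sumZ_ext; intro i;
      rewrite <- (sumZ_0 (zrange M)); apply sumZ_ext; intro j; apply Hg; lia.
Qed.

Lemma box3_shear_j K M g : supported3 K g -> (2 * K <= M)%nat ->
  box3 M (fun i j k => g i (- j)%Z (j + k)%Z) = box3 M g.
Proof.
  intros Hg HM. unfold box3. apply sumZ_ext; intro i.
  rewrite <- (sumZ_zrange_opp M (fun j => sumZ _ (fun k => g i j k))).
  apply sumZ_ext; intro j.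
  destruct (Z_le_gt_dec (Z.abs j) (Z.of_nat K)).
  - rewrite (sumZ_ext _ _ (fun k => g i (- j)%Z (k + j)%Z)) by (intro; f_equal; lia).
    apply (sumZ_zrange_shift K M j (fun k => g i (- j)%Z k)); [|lia].
    intros k Hk. apply Hg. lia.
  - transitivity 0; [|symmetry]; rewrite <- (sumZ_0 (zrange M)); apply sumZ_ext; intro k;
      apply Hg; lia.
Qed.

(** * A summable majorant *)

Definition decay (b : R) (z : Z) : R := Rpower (1 + IZR (Z.abs z)) (- (b + 1)).

Definition decay_tail (b : R) (N : nat) : R := 2 / b * Rpower (INR N + 1) (- b).

Lemma decay_pos b z : 0 < decay b z.
Proof. apply exp_pos. Qed.

Lemma decay_tail_nonneg b N : 0 < b -> 0 <= decay_tail b N.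
Proof.
  intro Hb. apply Rmult_le_pos; [apply Rlt_le, Rdiv_lt_0_compat; lra | apply Rlt_le, exp_pos].
Qed.

(* The integral comparison [(x+1)^(-b-1) <= int_x^(x+1) t^(-b-1) dt], proved with
   [ln (1 + 1/x) >= 1/(x+1)] and [exp t >= 1 + t]. *)
Lemma Rpower_telescope b x : 0 < b -> 0 < x ->
  b * Rpower (x + 1) (- (b + 1)) <= Rpower x (- b) - Rpower (x + 1) (- b).
Proof.
  intros Hb Hx. unfold Rpower.
  set (e := exp (- b * ln (x + 1))).
  assert (He : 0 < e) by apply exp_pos.
  assert (E1 : exp (- (b + 1) * ln (x + 1)) = e / (x + 1)).
  { replace (- (b + 1) * ln (x + 1)) with (- b * ln (x + 1) + - ln (x + 1)) by ring.
    rewrite exp_plus, exp_Ropp, exp_ln by lra. reflexivity. }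
  assert (E2 : exp (- b * ln x) = e * exp (b * (ln (x + 1) - ln x))).
  { unfold e. rewrite <- exp_plus. f_equal. ring. }
  assert (Hln : 1 / (x + 1) <= ln (x + 1) - ln x).
  { assert (Hy : 0 < x / (x + 1)) by (apply Rdiv_lt_0_compat; lra).
    pose proof (exp_ineq1_le (ln (x / (x + 1)))) as H. rewrite exp_ln in H by exact Hy.
    rewrite ln_div in H by lra.
    replace (x / (x + 1)) with (1 - 1 / (x + 1)) in H by (field; lra). lra. }
  pose proof (exp_ineq1_le (b * (ln (x + 1) - ln x))).
  rewrite E1, E2.
  apply Rle_trans with (e * (b * (ln (x + 1) - ln x))).
  - replace (b * (e / (x + 1))) with (e * (b * (1 / (x + 1)))) by (field; lra).
    apply Rmult_le_compat_l; [lra|]. apply Rmult_le_compat_l; lra.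
  - apply Rle_minus_r. rewrite <- (Rmult_1_r e) at 2. rewrite <- Rmult_plus_distr_l.
    apply Rmult_le_compat_l; lra.
Qed.

Lemma sum_decay_tail b N M : 0 < b -> (N <= M)%nat ->
  sumZ (zrange M) (decay b) + decay_tail b M <= sumZ (zrange N) (decay b) + decay_tail b N.
Proof.
  intros Hb; induction 1 as [|M _ IH]; [lra|].
  rewrite sumZ_zrange_S.
  assert (Hd : forall z, Z.abs z = Z.of_nat (S M) -> decay b z = Rpower (INR M + 2) (- (b + 1))).
  { intros z Hz. unfold decay. rewrite Hz, <- INR_IZR_INZ, S_INR. f_equal. ring. }
  rewrite !Hd by lia.
  pose proof (Rpower_telescope b (INR M + 1) Hb ltac:(pose proof (pos_INR M); lra)) as H.
  unfold decay_tail in *. rewrite S_INR. replace (INR M + 1 + 1) with (INR M + 2) in * by ring.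
  apply Rmult_le_compat_l with (r := 2 / b) in H; [|apply Rlt_le, Rdiv_lt_0_compat; lra].
  replace (2 / b * (b * Rpower (INR M + 2) (- (b + 1)))) with (2 * Rpower (INR M + 2) (- (b + 1)))
    in H by (field; lra).
  lra.
Qed.

Lemma sum_decay_le b M : 0 < b -> sumZ (zrange M) (decay b) <= 1 + 2 / b.
Proof.
  intro Hb. pose proof (sum_decay_tail b 0 M Hb ltac:(lia)) as H.
  pose proof (decay_tail_nonneg b M Hb).
  replace (sumZ (zrange 0) (decay b) + decay_tail b 0) with (1 + 2 / b) in H; [lra|].
  unfold decay_tail, decay, Rpower. simpl.
  rewrite !Rplus_0_r, !Rplus_0_l, ln_1, !Rmult_0_r, exp_0. ring.
Qed.

Lemma sum_decay_outside b N M : 0 < b ->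
  sumZ (zrange M) (fun z => (1 - indZ N z) * decay b z) <= decay_tail b N.
Proof.
  intro Hb. destruct (Nat.le_gt_cases N M) as [HNM | HMN].
  - rewrite (sumZ_ext _ _ (fun z => decay b z - indZ N z * decay b z)) by (intro; ring).
    rewrite sumZ_minus, sumZ_indZ by exact HNM.
    pose proof (sum_decay_tail b N M Hb HNM). pose proof (decay_tail_nonneg b M Hb). lra.
  - rewrite (sumZ_ext_in _ _ (fun _ => 0)), sumZ_0 by
      (intros z Hz%in_zrange; rewrite indZ_in by lia; ring).
    now apply decay_tail_nonneg.
Qed.

Definition decay3 (b : R) (i j k : Z) : R := decay b i * decay b j * decay b k.

Definition decay3_tail (b : R) (N : nat) : R := 3 * (1 + 2 / b) ^ 2 * decay_tail b N.

Lemma decay3_pos b i j k : 0 < decay3 b i j k.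
Proof. unfold decay3. repeat apply Rmult_lt_0_compat; apply decay_pos. Qed.

Lemma box3_decay3_outside b N M : 0 < b ->
  box3 M (fun i j k => (1 - indZ3 N i j k) * decay3 b i j k) <= decay3_tail b N.
Proof.
  intro Hb.
  set (out := fun z => (1 - indZ N z) * decay b z).
  apply Rle_trans with (box3 M (fun i j k => out i * decay b j * decay b k
    + decay b i * out j * decay b k + decay b i * decay b j * out k)).
  { apply box3_le; intros i j k. unfold out, indZ3, decay3.
    pose proof (decay_pos b i); pose proof (decay_pos b j); pose proof (decay_pos b k).
    assert (0 < decay b i * decay b j * decay b k) by (repeat apply Rmult_lt_0_compat; auto).
    destruct (indZ_cases N i) as [-> | ->]; destruct (indZ_cases N j) as [-> | ->];
      destruct (indZ_cases N k) as [-> | ->]; nra. }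
  rewrite !box3_plus, !box3_prod.
  pose proof (sum_decay_le b M Hb) as HS. pose proof (sum_decay_outside b N M Hb) as HT.
  assert (0 <= sumZ (zrange M) (decay b)) by (apply sumZ_nonneg; intro; apply Rlt_le, decay_pos).
  assert (0 <= sumZ (zrange M) out).
  { apply sumZ_nonneg; intro z. unfold out. pose proof (decay_pos b z).
    destruct (indZ_cases N z) as [-> | ->]; nra. }
  fold out in HT. unfold decay3_tail.
  set (S := sumZ (zrange M) (decay b)) in *. set (T := sumZ (zrange M) out) in *.
  assert (S * S <= (1 + 2 / b) ^ 2) by (simpl; rewrite Rmult_1_r; apply Rmult_le_compat; lra).
  assert (T * (S * S) <= decay_tail b N * (1 + 2 / b) ^ 2) by (apply Rmult_le_compat; nra).
  nra.
Qed.

Lemma decay_tail_cv0 b : 0 < b -> Un_cv (decay_tail b) 0.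
Proof.
  intros Hb eps Heps.
  set (d := eps * b / 2).
  assert (Hd : 0 < d) by (unfold d; apply Rdiv_lt_0_compat; [apply Rmult_lt_0_compat|]; lra).
  destruct (INR_unbounded (Rpower d (- / b))) as [N0 HN0].
  exists N0. intros N HN%le_INR. unfold Rdist, decay_tail. rewrite Rminus_0_r, Rabs_pos_eq.
  2:{ apply Rmult_le_pos; [apply Rlt_le, Rdiv_lt_0_compat; lra | apply Rlt_le, exp_pos]. }
  assert (Hlt : Rpower (Rpower d (- / b)) b < Rpower (INR N + 1) b).
  { apply Rlt_Rpower_l; [lra | split; [apply exp_pos | lra]]. }
  rewrite Rpower_mult, Rmult_comm, <- Ropp_mult_distr_r, Rinv_r, Rpower_Ropp, Rpower_1 in Hlt
    by lra.
  assert (HR : 0 < Rpower (INR N + 1) b) by apply exp_pos.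
  rewrite Rpower_Ropp.
  apply Rmult_lt_reg_l with (r := b / 2); [lra|].
  replace (b / 2 * (2 / b * / Rpower (INR N + 1) b)) with (/ Rpower (INR N + 1) b)
    by (field; lra).
  replace (b / 2 * eps) with (/ / d) by (rewrite Rinv_inv; unfold d; field; lra).
  apply Rinv_lt_contravar; [|exact Hlt].
  apply Rmult_lt_0_compat; [apply Rinv_0_lt_compat|]; lra.
Qed.

(** * Dominated box sums *)

Definition dominated (b C : R) (g : Z -> Z -> Z -> R) : Prop :=
  forall i j k, Rabs (g i j k) <= C * decay3 b i j k.

Definition box3_lim (g : Z -> Z -> Z -> R) : R := real (Lim_seq (fun N => box3 N g)).

Lemma dominated_coef_nonneg b C g : dominated b C g -> 0 <= C.
Proof.
  intro Hg. specialize (Hg 0%Z 0%Z 0%Z). pose proof (Rabs_pos (g 0%Z 0%Z 0%Z)).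
  pose proof (decay3_pos b 0 0 0). destruct (Rle_or_lt 0 C); nra.
Qed.

Lemma dominated_scal b C K g h : 0 <= K -> dominated b C g ->
  (forall i j k, Rabs (h i j k) <= K * Rabs (g i j k)) -> dominated b (K * C) h.
Proof.
  intros HK Hg Hh i j k. eapply Rle_trans; [apply Hh|].
  rewrite Rmult_assoc. apply Rmult_le_compat_l; auto.
Qed.

Lemma box3_dominated_cauchy b C g N M : 0 < b -> dominated b C g -> (N <= M)%nat ->
  Rabs (box3 M g - box3 N g) <= C * decay3_tail b N.
Proof.
  intros Hb Hg HNM. pose proof (dominated_coef_nonneg b C g Hg).
  rewrite <- (box3_indZ3 N M g HNM), <- box3_minus.
  eapply Rle_trans; [apply box3_abs|].
  eapply Rle_trans; [|apply Rmult_le_compat_l; [auto | apply (box3_decay3_outside b N M Hb)]].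
  rewrite <- box3_scal. apply box3_le; intros i j k.
  replace (g i j k - indZ3 N i j k * g i j k) with ((1 - indZ3 N i j k) * g i j k) by ring.
  specialize (Hg i j k). pose proof (Rabs_pos (g i j k)).
  rewrite Rabs_mult. destruct (indZ3_cases N i j k) as [-> | [-> _]].
  - rewrite Rminus_0_r, Rabs_R1. lra.
  - rewrite Rminus_diag, Rabs_R0. lra.
Qed.

Lemma Un_cv_const c : Un_cv (fun _ => c) c.
Proof. apply is_lim_seq_Reals, is_lim_seq_const. Qed.

Lemma Lim_seq_cauchy_rate (F t : nat -> R) :
  (forall N M, (N <= M)%nat -> Rabs (F M - F N) <= t N) -> Un_cv t 0 ->
  Un_cv F (real (Lim_seq F)) /\ forall N, Rabs (real (Lim_seq F) - F N) <= t N.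
Proof.
  intros HF Ht.
  assert (Hcauchy : Cauchy_crit F).
  { intros eps He. destruct (Ht (eps / 2)) as [N0 HN0]; [lra|].
    exists N0. intros n m Hn Hm. unfold Rdist in *.
    specialize (HN0 N0 (le_n _)). rewrite Rminus_0_r in HN0.
    pose proof (HF N0 n Hn). pose proof (HF N0 m Hm). pose proof (Rle_abs (t N0)).
    replace (F n - F m) with ((F n - F N0) - (F m - F N0)) by ring.
    eapply Rle_lt_trans; [apply Rabs_triang|]. rewrite Rabs_Ropp. lra. }
  destruct (Rcomplete.R_complete F Hcauchy) as [l Hl].
  rewrite (is_lim_seq_unique F l) by now apply is_lim_seq_Reals. cbn [real].
  split; [exact Hl|]. intro N. apply Rle_plus_epsilon. intros eps He.
  destruct (Hl eps He) as [N1 HN1].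
  specialize (HN1 (Nat.max N N1) ltac:(lia)). unfold Rdist in HN1.
  specialize (HF N (Nat.max N N1) ltac:(lia)).
  replace (l - F N) with (- (F (Nat.max N N1) - l) + (F (Nat.max N N1) - F N)) by ring.
  eapply Rle_trans; [apply Rabs_triang|]. rewrite Rabs_Ropp. lra.
Qed.

Lemma decay3_tail_cv0 b C : 0 < b -> Un_cv (fun N => C * decay3_tail b N) 0.
Proof.
  intro Hb. apply is_lim_seq_Reals.
  apply (is_lim_seq_ext (fun N => C * (3 * (1 + 2 / b) ^ 2) * decay_tail b N)).
  { intro N. unfold decay3_tail. ring. }
  replace (Finite 0) with (Rbar_mult (C * (3 * (1 + 2 / b) ^ 2)) 0) by (simpl; f_equal; ring).
  apply is_lim_seq_scal_l. now apply is_lim_seq_Reals, decay_tail_cv0.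
Qed.

Lemma box3_lim_spec b C g : 0 < b -> dominated b C g ->
  Un_cv (fun N => box3 N g) (box3_lim g) /\
  forall N, Rabs (box3_lim g - box3 N g) <= C * decay3_tail b N.
Proof.
  intros Hb Hg. apply Lim_seq_cauchy_rate; [|now apply decay3_tail_cv0].
  intros; now apply box3_dominated_cauchy.
Qed.

Lemma is_derive_box3_lim (f f' : R -> Z -> Z -> Z -> R) b C C' c (r : posreal) :
  0 < b ->
  (forall y, Boule c r y -> dominated b C (f y) /\ dominated b C' (f' y)) ->
  (forall y i j k, Boule c r y -> is_derive (fun A => f A i j k) y (f' y i j k)) ->
  forall y, Boule c r y -> is_derive (fun A => box3_lim (f A)) y (box3_lim (f' y)).
Proof.
  intros Hb Hdom Hder y Hy. apply is_derive_Reals.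
  apply (CVU_derivable (fun N A => box3 N (f A)) (fun N A => box3 N (f' A))
    (fun A => box3_lim (f A)) (fun A => box3_lim (f' A)) c r); auto.
  - intros eps He. destruct (decay3_tail_cv0 b C' Hb eps He) as [N0 HN0].
    exists N0. intros N A HN HA.
    eapply Rle_lt_trans; [apply (box3_lim_spec b C'); [exact Hb | apply Hdom, HA]|].
    specialize (HN0 N HN). unfold Rdist in HN0. rewrite Rminus_0_r in HN0.
    eapply Rle_lt_trans; [apply Rle_abs | exact HN0].
  - intros A HA. apply (box3_lim_spec b C); [exact Hb | apply Hdom, HA].
  - intros N A HA. apply is_derive_Reals, box3_derive. intros; now apply Hder.
Qed.

Section BoxSymmetry.

Variables s1 s2 s3 : Z -> Z -> Z -> Z.

Hypothesis sigma_invol : forall i j k,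
  s1 (s1 i j k) (s2 i j k) (s3 i j k) = i /\
  s2 (s1 i j k) (s2 i j k) (s3 i j k) = j /\
  s3 (s1 i j k) (s2 i j k) (s3 i j k) = k.

Hypothesis sigma_bound : forall (N : Z) i j k,
  (Z.abs i <= N -> Z.abs j <= N -> Z.abs k <= N ->
   Z.abs (s1 i j k) <= 2 * N /\ Z.abs (s2 i j k) <= 2 * N /\ Z.abs (s3 i j k) <= 2 * N)%Z.

Hypothesis box3_sigma : forall K M g, supported3 K g -> (2 * K <= M)%nat ->
  box3 M (fun i j k => g (s1 i j k) (s2 i j k) (s3 i j k)) = box3 M g.

(* [f] truncated to the preimage of the box of radius [N] is supported in the box of
   radius [2 N], so [box3_sigma] applies to it. *)
Lemma box3_sigma_truncate f N :
  box3 N (fun i j k => f (s1 i j k) (s2 i j k) (s3 i j k))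
  = box3 (4 * N) (fun i j k => f i j k * indZ3 N (s1 i j k) (s2 i j k) (s3 i j k)).
Proof.
  rewrite <- (box3_indZ3 N (4 * N)) by lia.
  set (g := fun i j k => f i j k * indZ3 N (s1 i j k) (s2 i j k) (s3 i j k)).
  rewrite <- (box3_sigma (2 * N) (4 * N) g); [| |lia].
  - apply box3_ext; intros i j k. unfold g. destruct (sigma_invol i j k) as (-> & -> & ->). ring.
  - intros i j k Hijk. unfold g.
    destruct (indZ3_cases N (s1 i j k) (s2 i j k) (s3 i j k)) as [-> | (_ & h1 & h2 & h3)];
      [ring|].
    pose proof (sigma_bound _ _ _ _ h1 h2 h3) as Hb2.
    destruct (sigma_invol i j k) as (e1 & e2 & e3). rewrite e1, e2, e3 in Hb2. lia.
Qed.

Lemma box3_sigma_diff b C f N : 0 < b -> dominated b C f ->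
  Rabs (box3 N (fun i j k => f (s1 i j k) (s2 i j k) (s3 i j k)) - box3 N f)
  <= C * decay3_tail b (Nat.div2 N).
Proof.
  intros Hb Hf. pose proof (dominated_coef_nonneg b C f Hf) as HC.
  assert (HN2 : (2 * Z.of_nat (Nat.div2 N) <= Z.of_nat N)%Z).
  { pose proof (Nat.div2_odd N) as H. destruct (Nat.odd N); simpl in H; lia. }
  rewrite box3_sigma_truncate, <- (box3_indZ3 N (4 * N) f), <- box3_minus by lia.
  eapply Rle_trans; [apply box3_abs|].
  eapply Rle_trans;
    [|apply Rmult_le_compat_l; [exact HC | apply (box3_decay3_outside _ _ (4 * N) Hb)]].
  rewrite <- box3_scal. apply box3_le; intros i j k.
  replace (f i j k * indZ3 N (s1 i j k) (s2 i j k) (s3 i j k) - indZ3 N i j k * f i j k)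
    with ((indZ3 N (s1 i j k) (s2 i j k) (s3 i j k) - indZ3 N i j k) * f i j k) by ring.
  rewrite Rabs_mult.
  specialize (Hf i j k). pose proof (Rabs_pos (f i j k)).
  destruct (indZ3_cases (Nat.div2 N) i j k) as [-> | (-> & h1 & h2 & h3)].
  - apply Rle_trans with (1 * Rabs (f i j k)); [|lra].
    apply Rmult_le_compat_r; [lra|].
    destruct (indZ3_cases N (s1 i j k) (s2 i j k) (s3 i j k)) as [-> | [-> _]];
      destruct (indZ3_cases N i j k) as [-> | [-> _]];
      rewrite ?Rminus_diag, ?Rminus_0_l, ?Rminus_0_r, ?Rabs_Ropp, ?Rabs_R0, ?Rabs_R1; lra.
  - destruct (sigma_bound _ _ _ _ h1 h2 h3) as (g1 & g2 & g3).
    rewrite !indZ3_in by lia. rewrite Rminus_diag, Rabs_R0. nra.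
Qed.

Lemma box3_sigma_diff_cv0 b C f : 0 < b -> dominated b C f ->
  Un_cv (fun N => box3 N (fun i j k => f (s1 i j k) (s2 i j k) (s3 i j k)) - box3 N f) 0.
Proof.
  intros Hb Hf eps He.
  destruct (decay3_tail_cv0 b C Hb eps He) as [N0 HN0].
  exists (2 * N0)%nat. intros N HN. unfold Rdist. rewrite Rminus_0_r.
  assert (HN' : (Nat.div2 N >= N0)%nat).
  { pose proof (Nat.div2_odd N) as H. destruct (Nat.odd N); simpl in H; lia. }
  specialize (HN0 _ HN'). unfold Rdist in HN0. rewrite Rminus_0_r in HN0.
  eapply Rle_lt_trans; [exact (box3_sigma_diff b C f N Hb Hf)|].
  eapply Rle_lt_trans; [apply Rle_abs | exact HN0].
Qed.

End BoxSymmetry.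

Lemma box3_lim_of_cv g l : Un_cv (fun N => box3 N g) l -> box3_lim g = l.
Proof.
  intro H. unfold box3_lim. now rewrite (is_lim_seq_unique _ l) by now apply is_lim_seq_Reals.
Qed.

Lemma box3_lim_ge_point b C g i j k :
  0 < b -> dominated b C g -> (forall i j k, 0 <= g i j k) -> g i j k <= box3_lim g.
Proof.
  intros Hb Hdom Hg.
  set (N0 := Z.to_nat (Z.max (Z.abs i) (Z.max (Z.abs j) (Z.abs k)))).
  change (Rbar_le (g i j k) (box3_lim g)).
  apply (is_lim_seq_le_loc (fun _ => g i j k) (fun N => box3 N g)).
  - exists N0. intros N HN. apply box3_ge_point; auto; lia.
  - apply is_lim_seq_const.
  - apply is_lim_seq_Reals, (box3_lim_spec b C g Hb Hdom).
Qed.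

(** * The terms of [L] and their derivatives in [A] *)

Definition is_origin (i j k : Z) : bool := (Z.eqb i 0 && Z.eqb j 0 && Z.eqb k 0)%bool.

Lemma term_origin A s i j k : is_origin i j k = true -> term A s i j k = 0.
Proof. unfold term. fold (is_origin i j k). now intros ->. Qed.

Lemma term_nonorigin A s i j k :
  is_origin i j k = false -> term A s i j k = Rpower ((A + 1) / Qform A i j k) s.
Proof. unfold term. fold (is_origin i j k). now intros ->. Qed.

Lemma sum_sq_ge1 i j k : is_origin i j k = false ->
  1 <= IZR (i + j) ^ 2 + IZR (j + k) ^ 2 + IZR (i + k) ^ 2.
Proof.
  intro Hz.
  replace (IZR (i + j) ^ 2 + IZR (j + k) ^ 2 + IZR (i + k) ^ 2)
    with (IZR ((i + j) * (i + j) + (j + k) * (j + k) + (i + k) * (i + k)))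
    by (rewrite !plus_IZR, !mult_IZR, !plus_IZR; ring).
  apply IZR_le.
  unfold is_origin in Hz.
  destruct (Z.eqb_spec i 0), (Z.eqb_spec j 0), (Z.eqb_spec k 0); simpl in Hz;
    try discriminate; nia.
Qed.

Lemma Qform_pos A i j k : 0 < A -> is_origin i j k = false -> 0 < Qform A i j k.
Proof.
  intros HA Hz. pose proof (sum_sq_ge1 i j k Hz). unfold Qform.
  pose proof (pow2_ge_0 (IZR (i + j))); pose proof (pow2_ge_0 (IZR (j + k)));
    pose proof (pow2_ge_0 (IZR (i + k))).
  destruct (Rle_or_lt A 1); nra.
Qed.

Lemma coord_sq_le_form A I J K c : 2 / 5 <= A <= 1 ->
  1 <= (I + J) ^ 2 + (J + K) ^ 2 + (I + K) ^ 2 -> (c = I \/ c = J \/ c = K) ->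
  (1 + Rabs c) ^ 2 <= 9 * (A * (I + J) ^ 2 + (J + K) ^ 2 + (I + K) ^ 2).
Proof.
  intros HA HS Hc.
  assert (H1 : (1 + Rabs c) ^ 2 <= 2 + 2 * c ^ 2).
  { pose proof (pow2_abs c). pose proof (pow2_ge_0 (Rabs c - 1)). nra. }
  assert (H2 : 4 * c ^ 2 <= 3 * ((I + J) ^ 2 + (J + K) ^ 2 + (I + K) ^ 2)).
  { destruct Hc as [-> | [-> | ->]].
    - pose proof (pow2_ge_0 ((I + J) + (J + K))); pose proof (pow2_ge_0 ((J + K) + (I + K)));
        pose proof (pow2_ge_0 ((I + J) - (I + K))). nra.
    - pose proof (pow2_ge_0 ((I + J) - (J + K))); pose proof (pow2_ge_0 ((I + J) + (I + K)));
        pose proof (pow2_ge_0 ((J + K) + (I + K))). nra.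
    - pose proof (pow2_ge_0 ((I + J) + (J + K))); pose proof (pow2_ge_0 ((I + J) + (I + K)));
        pose proof (pow2_ge_0 ((J + K) - (I + K))). nra. }
  assert (H3 : A * ((I + J) ^ 2 + (J + K) ^ 2 + (I + K) ^ 2)
               <= A * (I + J) ^ 2 + (J + K) ^ 2 + (I + K) ^ 2).
  { pose proof (pow2_ge_0 (J + K)); pose proof (pow2_ge_0 (I + K)). nra. }
  nra.
Qed.

Lemma ln_coord_le_Qform A i j k c : 2 / 5 <= A <= 1 -> is_origin i j k = false ->
  (c = i \/ c = j \/ c = k) -> 2 * ln (1 + IZR (Z.abs c)) <= ln 9 + ln (Qform A i j k).
Proof.
  intros HA Hz Hc.
  assert (Hp : 0 < 1 + IZR (Z.abs c)) by (pose proof (IZR_le 0 (Z.abs c) ltac:(lia)); lra).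
  assert (HQ : 0 < Qform A i j k) by (apply Qform_pos; auto; lra).
  replace (2 * ln (1 + IZR (Z.abs c))) with (ln ((1 + IZR (Z.abs c)) ^ 2))
    by (rewrite ln_pow by lra; simpl; ring).
  rewrite <- ln_mult by lra.
  apply ln_le; [apply pow_lt; lra|].
  pose proof (sum_sq_ge1 i j k Hz). rewrite abs_IZR.
  unfold Qform. rewrite !plus_IZR in *.
  apply coord_sq_le_form; auto. destruct Hc as [-> | [-> | ->]]; auto.
Qed.

Lemma exp_le_compat x y : x <= y -> exp x <= exp y.
Proof. intros [H | ->]; [apply Rlt_le, exp_increasing, H | apply Rle_refl]. Qed.

Lemma term_dominated A s : 0 < s -> 2 / 5 <= A <= 3 / 5 ->
  dominated (2 * s / 3 - 1) (Rpower 18 s) (term A s).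
Proof.
  intros Hs HA i j k. destruct (is_origin i j k) eqn:Hz.
  - rewrite term_origin, Rabs_R0 by exact Hz.
    apply Rmult_le_pos; [apply Rlt_le, exp_pos | apply Rlt_le, decay3_pos].
  - rewrite term_nonorigin, Rabs_pos_eq by (auto; apply Rlt_le, exp_pos).
    assert (HQ : 0 < Qform A i j k) by (apply Qform_pos; auto; lra).
    pose proof (ln_coord_le_Qform A i j k i ltac:(lra) Hz ltac:(auto)) as Li.
    pose proof (ln_coord_le_Qform A i j k j ltac:(lra) Hz ltac:(auto)) as Lj.
    pose proof (ln_coord_le_Qform A i j k k ltac:(lra) Hz ltac:(auto)) as Lk.
    assert (L2 : ln (A + 1) <= ln 2) by (apply ln_le; lra).
    assert (L18 : ln 18 = ln 2 + ln 9) by (rewrite <- ln_mult by lra; f_equal; lra).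
    unfold decay3, decay, Rpower. rewrite <- !exp_plus. apply exp_le_compat.
    rewrite ln_div by lra. rewrite L18.
    replace (- (2 * s / 3 - 1 + 1)) with (- (2 / 3) * s) by field.
    nra.
Qed.

Definition dlogQ (A : R) (i j k : Z) : R := IZR (i + j) ^ 2 / Qform A i j k.

Definition dlog_ratio (A : R) (i j k : Z) : R := 1 / (A + 1) - dlogQ A i j k.

Definition term1 (A s : R) (i j k : Z) : R := s * term A s i j k * dlog_ratio A i j k.

Definition term2 (A s : R) (i j k : Z) : R :=
  term A s i j k * (s ^ 2 * dlog_ratio A i j k ^ 2 + s * (dlogQ A i j k ^ 2 - (1 / (A + 1)) ^ 2)).

Lemma is_derive_ratio_pow s a b c A : 0 < A -> 0 < A * a + b + c ->
  is_derive (fun A => Rpower ((A + 1) / (A * a + b + c)) s) A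
    (s * Rpower ((A + 1) / (A * a + b + c)) s * (1 / (A + 1) - a / (A * a + b + c))).
Proof.
  intros HA HQ. unfold Rpower. auto_derive.
  - repeat split; try lra. apply Rdiv_lt_0_compat; lra.
  - set (e := exp _). field. lra.
Qed.

Lemma is_derive_ratio_pow_dlog s a b c A : 0 < A -> 0 < A * a + b + c ->
  is_derive (fun A => s * Rpower ((A + 1) / (A * a + b + c)) s
                        * (1 / (A + 1) - a / (A * a + b + c))) A
    (Rpower ((A + 1) / (A * a + b + c)) s
     * (s ^ 2 * (1 / (A + 1) - a / (A * a + b + c)) ^ 2
        + s * ((a / (A * a + b + c)) ^ 2 - (1 / (A + 1)) ^ 2))).
Proof.
  intros HA HQ. unfold Rpower. auto_derive.
  - repeat split; try lra. apply Rdiv_lt_0_compat; lra.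
  - set (e := exp _). field. lra.
Qed.

Lemma term_derive A s i j k : 0 < A ->
  is_derive (fun A => term A s i j k) A (term1 A s i j k).
Proof.
  intro HA. unfold term1. destruct (is_origin i j k) eqn:Hz.
  - rewrite term_origin by exact Hz. rewrite Rmult_0_r, Rmult_0_l.
    apply (is_derive_ext (fun _ => 0)); [intro; now rewrite term_origin by exact Hz|].
    apply (is_derive_const (K := R_AbsRing) (V := R_NormedModule)).
  - apply (is_derive_ext (fun A => Rpower ((A + 1) / Qform A i j k) s));
      [intro; now rewrite term_nonorigin by exact Hz|].
    rewrite term_nonorigin by exact Hz. unfold dlog_ratio, dlogQ, Qform.
    apply is_derive_ratio_pow; [exact HA | apply (Qform_pos A i j k HA Hz)].
Qed.

Lemma term1_derive A s i j k : 0 < A ->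
  is_derive (fun A => term1 A s i j k) A (term2 A s i j k).
Proof.
  intro HA. unfold term1, term2. destruct (is_origin i j k) eqn:Hz.
  - rewrite term_origin by exact Hz. rewrite Rmult_0_l.
    apply (is_derive_ext (fun _ => 0));
      [intro; rewrite term_origin, Rmult_0_r, Rmult_0_l by exact Hz; reflexivity|].
    apply (is_derive_const (K := R_AbsRing) (V := R_NormedModule)).
  - apply (is_derive_ext (fun A => s * Rpower ((A + 1) / Qform A i j k) s * dlog_ratio A i j k));
      [intro; now rewrite term_nonorigin by exact Hz|].
    rewrite term_nonorigin by exact Hz. unfold dlog_ratio, dlogQ, Qform.
    apply is_derive_ratio_pow_dlog; [exact HA | apply (Qform_pos A i j k HA Hz)].
Qed.

Lemma dlogQ_bounds A i j k : 2 / 5 <= A -> 0 <= dlogQ A i j k <= 5 / 2.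
Proof.
  intro HA. unfold dlogQ. destruct (is_origin i j k) eqn:Hz.
  - unfold is_origin in Hz.
    destruct (Z.eqb_spec i 0), (Z.eqb_spec j 0); simpl in Hz; try discriminate. subst.
    simpl. unfold Rdiv. rewrite !Rmult_0_l. lra.
  - pose proof (Qform_pos A i j k ltac:(lra) Hz) as HQ.
    pose proof (pow2_ge_0 (IZR (i + j))); pose proof (pow2_ge_0 (IZR (j + k)));
      pose proof (pow2_ge_0 (IZR (i + k))).
    split; [apply Rdiv_le_0_compat; lra|].
    apply Rmult_le_reg_r with (Qform A i j k); [exact HQ|].
    unfold Rdiv. rewrite Rmult_assoc, Rinv_l by lra. unfold Qform in *. nra.
Qed.

Lemma dlog_ratio_bound A i j k : 2 / 5 <= A -> Rabs (dlog_ratio A i j k) <= 5 / 2.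
Proof.
  intro HA. pose proof (dlogQ_bounds A i j k HA).
  assert (0 < 1 / (A + 1) <= 1).
  { split; [apply Rdiv_lt_0_compat; lra|].
    apply Rmult_le_reg_r with (A + 1); [lra|]. field_simplify; lra. }
  unfold dlog_ratio. apply Rabs_le. lra.
Qed.

Lemma term1_dominated A s : 0 < s -> 2 / 5 <= A <= 3 / 5 ->
  dominated (2 * s / 3 - 1) (5 / 2 * s * Rpower 18 s) (term1 A s).
Proof.
  intros Hs HA. apply (dominated_scal _ _ _ (term A s)); [lra | now apply term_dominated|].
  intros i j k. unfold term1. rewrite !Rabs_mult, (Rabs_pos_eq s) by lra.
  replace (5 / 2 * s * Rabs (term A s i j k)) with (s * Rabs (term A s i j k) * (5 / 2))
    by ring.
  apply Rmult_le_compat_l; [apply Rmult_le_pos; [lra | apply Rabs_pos]|].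
  now apply dlog_ratio_bound.
Qed.

Lemma term2_dominated A s : 0 < s -> 2 / 5 <= A <= 3 / 5 ->
  dominated (2 * s / 3 - 1) (25 / 4 * (s ^ 2 + s) * Rpower 18 s) (term2 A s).
Proof.
  intros Hs HA. apply (dominated_scal _ _ _ (term A s)); [nra | now apply term_dominated|].
  intros i j k. unfold term2. rewrite Rabs_mult, Rmult_comm.
  apply Rmult_le_compat_r; [apply Rabs_pos|].
  pose proof (dlogQ_bounds A i j k ltac:(lra)) as Hu.
  pose proof (dlog_ratio_bound A i j k ltac:(lra)) as Hr.
  assert (Hw : 0 < 1 / (A + 1) <= 1).
  { split; [apply Rdiv_lt_0_compat; lra|].
    apply Rmult_le_reg_r with (A + 1); [lra|]. field_simplify; lra. }
  set (r := dlog_ratio A i j k) in *. set (u := dlogQ A i j k) in *.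
  set (w := 1 / (A + 1)) in *.
  assert (Hr2 : r ^ 2 <= 25 / 4) by (rewrite <- pow2_abs; pose proof (Rabs_pos r); nra).
  assert (0 <= s ^ 2 * r ^ 2 <= s ^ 2 * (25 / 4)).
  { split; [apply Rmult_le_pos; apply pow2_ge_0|].
    apply Rmult_le_compat_l; [apply pow2_ge_0 | lra]. }
  assert (-1 <= u ^ 2 - w ^ 2 <= 25 / 4) by (simpl; split; nra).
  assert (- s <= s * (u ^ 2 - w ^ 2) <= s * (25 / 4)) by (split; nra).
  apply Rabs_le. split; nra.
Qed.

(** * The body-centred cubic point [A = 1/2] *)

Lemma is_origin_shear_k i j k : is_origin (i + k) (j + k) (- k) = is_origin i j k.
Proof.
  unfold is_origin. destruct (Z.eqb_spec i 0), (Z.eqb_spec j 0), (Z.eqb_spec k 0),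
    (Z.eqb_spec (i + k) 0), (Z.eqb_spec (j + k) 0), (Z.eqb_spec (- k) 0); simpl; auto; lia.
Qed.

Lemma is_origin_shear_j i j k : is_origin i (- j) (j + k) = is_origin i j k.
Proof.
  unfold is_origin. destruct (Z.eqb_spec i 0), (Z.eqb_spec j 0), (Z.eqb_spec k 0),
    (Z.eqb_spec (- j) 0), (Z.eqb_spec (j + k) 0); simpl; auto; lia.
Qed.

Lemma Qform_half_shear_k i j k : Qform (1 / 2) (i + k) (j + k) (- k) = Qform (1 / 2) i j k.
Proof. unfold Qform. rewrite ?plus_IZR, ?opp_IZR. field. Qed.

Lemma Qform_half_shear_j i j k : Qform (1 / 2) i (- j) (j + k) = Qform (1 / 2) i j k.
Proof. unfold Qform. rewrite ?plus_IZR, ?opp_IZR. field. Qed.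

Lemma term_half_shear_k s i j k : term (1 / 2) s (i + k) (j + k) (- k) = term (1 / 2) s i j k.
Proof.
  unfold term. fold (is_origin (i + k) (j + k) (- k)) (is_origin i j k).
  now rewrite is_origin_shear_k, Qform_half_shear_k.
Qed.

Lemma term_half_shear_j s i j k : term (1 / 2) s i (- j) (j + k) = term (1 / 2) s i j k.
Proof.
  unfold term. fold (is_origin i (- j) (j + k)) (is_origin i j k).
  now rewrite is_origin_shear_j, Qform_half_shear_j.
Qed.

Lemma term_nonneg A s i j k : 0 <= term A s i j k.
Proof. unfold term. destruct (_ && _)%bool; [lra | apply Rlt_le, exp_pos]. Qed.

Lemma weight_orbit_sum i j k :
  IZR (i + j) ^ 2 + IZR ((i + k) + (j + k)) ^ 2 + IZR (i + - j) ^ 2 = 2 * Qform (1 / 2) i j k.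
Proof. unfold Qform. rewrite ?plus_IZR, ?opp_IZR. field. Qed.

Definition term_dlogQ (s : R) (i j k : Z) : R := term (1 / 2) s i j k * dlogQ (1 / 2) i j k.

Lemma term1_half_orbit s i j k :
  term1 (1 / 2) s i j k = s / 3 *
    ((term_dlogQ s (i + k) (j + k) (- k) - term_dlogQ s i j k)
     + (term_dlogQ s i (- j) (j + k) - term_dlogQ s i j k)).
Proof.
  unfold term_dlogQ, dlogQ.
  rewrite term_half_shear_k, term_half_shear_j, Qform_half_shear_k, Qform_half_shear_j.
  unfold term1, dlog_ratio, dlogQ. destruct (is_origin i j k) eqn:Hz.
  - rewrite term_origin by exact Hz. ring.
  - pose proof (Qform_pos (1 / 2) i j k ltac:(lra) Hz) as HQ.
    pose proof (weight_orbit_sum i j k) as Hw.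
    replace (IZR (i + k + (j + k)) ^ 2)
      with (2 * Qform (1 / 2) i j k - IZR (i + j) ^ 2 - IZR (i + - j) ^ 2) by lra.
    field. lra.
Qed.

Lemma term_dlogQ_dominated s : 0 < s ->
  dominated (2 * s / 3 - 1) (5 / 2 * Rpower 18 s) (term_dlogQ s).
Proof.
  intro Hs. apply (dominated_scal _ _ _ (term (1 / 2) s)); [lra | apply term_dominated; lra|].
  intros i j k. unfold term_dlogQ. rewrite Rabs_mult, Rmult_comm.
  apply Rmult_le_compat_r; [apply Rabs_pos|].
  pose proof (dlogQ_bounds (1 / 2) i j k ltac:(lra)). rewrite Rabs_pos_eq; lra.
Qed.

Lemma box3_lim_term1_half s : 3 / 2 < s -> box3_lim (term1 (1 / 2) s) = 0.
Proof.
  intro Hs. assert (Hb : 0 < 2 * s / 3 - 1) by lra.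
  pose proof (term_dlogQ_dominated s ltac:(lra)) as Hdom.
  apply box3_lim_of_cv.
  apply (Un_cv_ext (fun N => s / 3 *
    ((box3 N (fun i j k => term_dlogQ s (i + k) (j + k) (- k)) - box3 N (term_dlogQ s))
     + (box3 N (fun i j k => term_dlogQ s i (- j) (j + k)) - box3 N (term_dlogQ s))))).
  { intro N. rewrite (box3_ext _ _ _ (term1_half_orbit s)), box3_scal, box3_plus, !box3_minus.
    reflexivity. }
  rewrite <- (Rmult_0_r (s / 3)), <- (Rplus_0_r 0).
  apply CV_mult; [apply Un_cv_const|].
  apply CV_plus.
  - apply (box3_sigma_diff_cv0 (fun i j k => i + k) (fun i j k => j + k) (fun i j k => - k))%Z
      with (b := 2 * s / 3 - 1) (C := 5 / 2 * Rpower 18 s); auto.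
    + intros; repeat split; lia.
    + intros; repeat split; lia.
    + exact box3_shear_k.
  - apply (box3_sigma_diff_cv0 (fun i j k => i) (fun i j k => - j) (fun i j k => j + k))%Z
      with (b := 2 * s / 3 - 1) (C := 5 / 2 * Rpower 18 s); auto.
    + intros; repeat split; lia.
    + intros; repeat split; lia.
    + exact box3_shear_j.
Qed.

Definition term_dlog2 (s : R) (i j k : Z) : R :=
  term (1 / 2) s i j k * dlog_ratio (1 / 2) i j k ^ 2.

Lemma term2_half s i j k :
  term2 (1 / 2) s i j k = (s ^ 2 + s) * term_dlog2 s i j k - 4 / 3 * term1 (1 / 2) s i j k.
Proof. unfold term2, term_dlog2, term1, dlog_ratio. field. Qed.

Lemma term_dlog2_dominated s : 0 < s ->
  dominated (2 * s / 3 - 1) (25 / 4 * Rpower 18 s) (term_dlog2 s).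
Proof.
  intro Hs. apply (dominated_scal _ _ _ (term (1 / 2) s)); [lra | apply term_dominated; lra|].
  intros i j k. unfold term_dlog2. rewrite Rabs_mult, Rmult_comm.
  apply Rmult_le_compat_r; [apply Rabs_pos|].
  pose proof (dlog_ratio_bound (1 / 2) i j k ltac:(lra)) as Hr.
  rewrite Rabs_pos_eq by apply pow2_ge_0. rewrite <- pow2_abs.
  pose proof (Rabs_pos (dlog_ratio (1 / 2) i j k)). nra.
Qed.

Lemma term_dlog2_001 s : 0 < term_dlog2 s 0 0 1.
Proof.
  unfold term_dlog2, dlog_ratio, dlogQ, term, Qform. simpl.
  apply Rmult_lt_0_compat; [apply exp_pos|].
  replace (1 / (1 / 2 + 1) - 0 ^ 2 / (1 / 2 * 0 ^ 2 + 1 ^ 2 + 1 ^ 2)) with (2 / 3) by field.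
  nra.
Qed.

Lemma box3_lim_term2_half_pos s : 3 / 2 < s -> 0 < box3_lim (term2 (1 / 2) s).
Proof.
  intro Hs. assert (Hb : 0 < 2 * s / 3 - 1) by lra.
  pose proof (term_dlog2_dominated s ltac:(lra)) as Hdom.
  rewrite (box3_lim_of_cv _ ((s ^ 2 + s) * box3_lim (term_dlog2 s) - 4 / 3 * 0)).
  - pose proof (box3_lim_ge_point _ _ _ 0 0 1 Hb Hdom) as Hge.
    pose proof (term_dlog2_001 s).
    assert (0 <= term_dlog2 s 0 0 1 <= box3_lim (term_dlog2 s)).
    { split; [lra|]. apply Hge. intros i j k. unfold term_dlog2.
      apply Rmult_le_pos; [apply term_nonneg | apply pow2_ge_0]. }
    nra.
  - apply (Un_cv_ext (fun N =>
      (s ^ 2 + s) * box3 N (term_dlog2 s) - 4 / 3 * box3 N (term1 (1 / 2) s))).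
    { intro N. now rewrite (box3_ext _ _ _ (term2_half s)), box3_minus, !box3_scal. }
    apply CV_minus; apply CV_mult; try apply Un_cv_const.
    + now apply (box3_lim_spec _ _ _ Hb Hdom).
    + rewrite <- (box3_lim_term1_half s Hs).
      apply (box3_lim_spec _ _ _ Hb (term1_dominated (1 / 2) s ltac:(lra) ltac:(lra))).
Qed.

Definition radius : posreal := mkposreal (1 / 10) ltac:(lra).

Lemma Boule_radius y : Boule (1 / 2) radius y -> 2 / 5 <= y <= 3 / 5.
Proof. unfold Boule. simpl. intro H. apply Rabs_def2 in H. lra. Qed.

Theorem theorem3p1 (s : R) (hs : 3 / 2 < s) :
  is_derive (fun A => L A s) (1 / 2) 0 /\
  (locally (1 / 2) (fun A => ex_derive (fun x => L x s) A) /\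
   exists d2 : R, is_derive (Derive (fun x => L x s)) (1 / 2) d2 /\ 0 < d2).
Proof.
  change L with (fun A s => box3_lim (term A s)). cbv beta.
  assert (Hs : 0 < s) by lra.
  assert (Hb : 0 < 2 * s / 3 - 1) by lra.
  assert (dL : forall y, Boule (1 / 2) radius y ->
            is_derive (fun A => box3_lim (term A s)) y (box3_lim (term1 y s))).
  { apply (is_derive_box3_lim (fun A => term A s) (fun A => term1 A s) _
      (Rpower 18 s) (5 / 2 * s * Rpower 18 s) _ _ Hb).
    - intros y Hy%Boule_radius. split; [now apply term_dominated | now apply term1_dominated].
    - intros y i j k Hy%Boule_radius. apply term_derive; lra. }
  assert (dL' : forall y, Boule (1 / 2) radius y ->
            is_derive (fun A => box3_lim (term1 A s)) y (box3_lim (term2 y s))).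
  { apply (is_derive_box3_lim (fun A => term1 A s) (fun A => term2 A s) _
      (5 / 2 * s * Rpower 18 s) (25 / 4 * (s ^ 2 + s) * Rpower 18 s) _ _ Hb).
    - intros y Hy%Boule_radius. split; [now apply term1_dominated | now apply term2_dominated].
    - intros y i j k Hy%Boule_radius. apply term1_derive; lra. }
  pose proof (Boule_center (1 / 2) radius) as Hc.
  split; [|split].
  - rewrite <- (box3_lim_term1_half s hs). now apply dL.
  - exists radius. intros y Hy. eexists. now apply dL.
  - exists (box3_lim (term2 (1 / 2) s)). split; [|now apply box3_lim_term2_half_pos].
    apply (is_derive_ext_loc (fun A => box3_lim (term1 A s))); [|now apply dL'].
    exists radius. intros y Hy. symmetry. apply is_derive_unique. now apply dL.
Qed.
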